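(* Let $I=[0,1]$ and $f_{1,\infty}$ an $m$-periodic sequence of continuous self-maps of $I$. If $(I,f_{1,\infty})$ is weakly mixing, then it is ergodically sensitive and syndetically sensitive.
   Context: $m$-periodic: $f_{n+m}=f_n$ for all $n$. Write $f_1^n=f_n\circ\cdots\circ f_1$. Weakly mixing: for all non-empty open $U_1,U_2,V_1,V_2$ there is $n$ with $f_1^n(U_i)\cap V_i\ne\emptyset$, $i=1,2$. For open $U$ and $\delta>0$, $N_{f_{1,\infty}}(U,\delta)=\{n\in\mathbb{N}:\exists x,y\in U,\ |f_1^n(x)-f_1^n(y)|>\delta\}$. A set $F\subseteq\mathbb{N}$ is syndetic if there is $a$ with $\{i,\dots,i+a\}\cap F\ne\emptyset$ for all $i$; upper density $\overline{d}(S)=\limsup_{n\to\infty}\frac1n|S\cap\{0,\dots,n-1\}|$. Syndetically (resp. ergodically) sensitive: there is $\delta>0$ with $N_{f_{1,\infty}}(U,\delta)$ syndetic (resp. of positive upper density) for every non-empty open $U$. *)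

From Stdlib Require Import Reals Lra Lia ClassicalEpsilon.
Open Scope R_scope.

Definition inI (x : R) : Prop := 0 <= x <= 1.

Definition openI (U : R -> Prop) : Prop :=
  (forall x, U x -> inI x) /\
  forall x, U x -> exists eps, 0 < eps /\
    forall y, inI y -> Rabs (y - x) < eps -> U y.

Definition nonempty (U : R -> Prop) : Prop := exists x, U x.

Definition cont_selfmap_I (g : R -> R) : Prop :=
  (forall x, inI x -> inI (g x)) /\
  (forall x eps, inI x -> 0 < eps -> exists del, 0 < del /\
     forall y, inI y -> Rabs (y - x) < del -> Rabs (g y - g x) < eps).

(* A sequence f_{1,oo}: the maps are f 1, f 2, ...; f 0 is unused. *)
Definition seq_cont_selfmaps_I (f : nat -> R -> R) : Prop :=
  forall n, (1 <= n)%nat -> cont_selfmap_I (f n).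

Definition periodic_seq (m : nat) (f : nat -> R -> R) : Prop :=
  forall n, (1 <= n)%nat -> f (n + m)%nat = f n.

Fixpoint comp1 (f : nat -> R -> R) (n : nat) (x : R) : R :=
  match n with
  | O => x
  | S k => f (S k) (comp1 f k x)
  end.

Definition weakly_mixing (f : nat -> R -> R) : Prop :=
  forall U1 U2 V1 V2 : R -> Prop,
    openI U1 -> nonempty U1 -> openI U2 -> nonempty U2 ->
    openI V1 -> nonempty V1 -> openI V2 -> nonempty V2 ->
    exists n : nat,
      (exists x, U1 x /\ V1 (comp1 f n x)) /\
      (exists x, U2 x /\ V2 (comp1 f n x)).

Definition Nset (f : nat -> R -> R) (U : R -> Prop) (delta : R) (n : nat) : Prop :=
  exists x y, U x /\ U y /\ Rabs (comp1 f n x - comp1 f n y) > delta.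

Definition syndetic (F : nat -> Prop) : Prop :=
  exists a : nat, forall i : nat, exists j, (i <= j <= i + a)%nat /\ F j.

Fixpoint count_below (S : nat -> Prop) (n : nat) : R :=
  match n with
  | O => 0
  | Datatypes.S k => count_below S k +
           (if excluded_middle_informative (S k) then 1 else 0)
  end.

(* Positive upper density: limsup_{n->oo} |S cap {0..n-1}|/n > 0.
   Since the ratios lie in [0,1], this is literally:
   there is c > 0 such that the ratio exceeds c for infinitely many n. *)
Definition pos_upper_density (S : nat -> Prop) : Prop :=
  exists c, 0 < c /\ forall N : nat, exists n : nat,
    (N <= n)%nat /\ (0 < n)%nat /\ count_below S n / INR n > c.

Definition syndetically_sensitive (f : nat -> R -> R) : Prop :=
  exists delta : R, 0 < delta /\
    (forall U, openI U -> nonempty U -> syndetic (Nset f U delta)).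

Definition ergodically_sensitive (f : nat -> R -> R) : Prop :=
  exists delta : R, 0 < delta /\
    (forall U, openI U -> nonempty U -> pos_upper_density (Nset f U delta)).

From Stdlib Require Import Reals Lra Lia ZArith ClassicalEpsilon.
Open Scope R_scope.

(* Weak mixing, together with the equicontinuity of the finitely many maps
   [f_1^r], [r < m], gives an [eta > 0] such that every open set is
   [eta]-spread at some multiple of the period.  Fix a finite net of balls of
   radius [eta / 4] such that every interval of length [eta] contains one.  Each
   net ball is [eta]-spread within at most [c] periods, and by the intermediate
   value theorem its image then contains a net ball again.  Starting from a ball
   inside [U], this shows that the times at which [U] is [eta]-spread have gaps of
   at most [c] periods: [N(U, eta)] is syndetic, hence of positive upper density. *)

Definition continuous_on_I (g : R -> R) : Prop :=
  forall x eps, inI x -> 0 < eps -> exists del, 0 < del /\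
     forall y, inI y -> Rabs (y - x) < del -> Rabs (g y - g x) < eps.

Definition convex_set (X : R -> Prop) : Prop :=
  forall a b w, X a -> X b -> Rmin a b <= w <= Rmax a b -> X w.

Definition ball (c r : R) (y : R) : Prop := inI y /\ Rabs (y - c) < r.

(* [g (clamp x)] extends [g] to all of [R], so that the theorems of [Reals] on
   continuous real functions (Heine, IVT) apply. *)
Definition clamp (x : R) : R := Rmax 0 (Rmin 1 x).

Lemma clamp_inI x : inI (clamp x).
Proof. unfold clamp, inI, Rmax, Rmin; repeat destruct Rle_dec; lra. Qed.

Lemma clamp_id x : inI x -> clamp x = x.
Proof. unfold clamp, inI, Rmax, Rmin; intros; repeat destruct Rle_dec; lra. Qed.

Lemma clamp_dist x y : Rabs (clamp y - clamp x) <= Rabs (y - x).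
Proof.
  unfold clamp, Rmax, Rmin; repeat destruct Rle_dec;
  unfold Rabs; repeat destruct Rcase_abs; lra.
Qed.

Lemma continuity_clamp_ext g : continuous_on_I g -> continuity (fun x => g (clamp x)).
Proof.
  intros hg x eps heps; simpl; unfold R_dist.
  destruct (hg (clamp x) eps (clamp_inI x) heps) as [del [hdel Hdel]].
  exists del; split; [lra|]. intros y [_ hy].
  apply Hdel; [apply clamp_inI|]. pose proof (clamp_dist x y); lra.
Qed.

Lemma continuous_on_I_uniform g : continuous_on_I g -> forall eps, 0 < eps ->
  exists del, 0 < del /\ forall a b, inI a -> inI b -> Rabs (a - b) < del ->
    Rabs (g a - g b) < eps.
Proof.
  intros hg eps heps.
  destruct (Heine (fun x => g (clamp x)) (fun c => 0 <= c <= 1) (compact_P3 0 1)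
    (fun x _ => continuity_clamp_ext g hg x) (mkposreal eps heps)) as [[del hdel] Hdel].
  exists del; split; [exact hdel|]. intros a b ha hb hab.
  specialize (Hdel a b ha hb hab); simpl in Hdel. rewrite !clamp_id in Hdel; auto.
Qed.

Lemma continuous_on_I_IVT_le g a b v : continuous_on_I g -> inI a -> inI b -> a <= b ->
  Rmin (g a) (g b) <= v <= Rmax (g a) (g b) -> exists w, a <= w <= b /\ g w = v.
Proof.
  intros hg ha hb hab hv.
  destruct (IVT_cor (fun x => g (clamp x) - v) a b) as [w [hw Hw]]; auto.
  - apply continuity_minus; [apply continuity_clamp_ext; auto|apply continuity_const].
    intros ? ?; auto.
  - rewrite !clamp_id; auto.
    revert hv; unfold Rmin, Rmax; repeat destruct Rle_dec; intros; nra.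
  - exists w; split; auto. rewrite clamp_id in Hw; [lra|]. unfold inI in *; lra.
Qed.

Lemma continuous_on_I_IVT g a b v : continuous_on_I g -> inI a -> inI b ->
  Rmin (g a) (g b) <= v <= Rmax (g a) (g b) ->
  exists w, Rmin a b <= w <= Rmax a b /\ g w = v.
Proof.
  intros hg ha hb hv. destruct (Rle_dec a b).
  - destruct (continuous_on_I_IVT_le g a b v) as [w [? ?]]; auto.
    exists w; split; auto. unfold Rmin, Rmax; repeat destruct Rle_dec; lra.
  - destruct (continuous_on_I_IVT_le g b a v) as [w [? ?]]; auto; [lra| |].
    + revert hv; unfold Rmin, Rmax; repeat destruct Rle_dec; intros; lra.
    + exists w; split; auto. unfold Rmin, Rmax; repeat destruct Rle_dec; lra.
Qed.

Lemma cont_selfmap_I_comp1 f : seq_cont_selfmaps_I f -> forall n,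
  (forall x, inI x -> inI (comp1 f n x)) /\ continuous_on_I (comp1 f n).
Proof.
  intros hf n. induction n as [|n [IHI IHc]].
  - split; [auto|]. intros x eps _ heps. exists eps; split; auto.
  - destruct (hf (S n) ltac:(lia)) as [hI hc]. split.
    + intros x hx; simpl; auto.
    + intros x eps hx heps; simpl.
      destruct (hc (comp1 f n x) eps (IHI x hx) heps) as [d1 [hd1 H1]].
      destruct (IHc x d1 hx hd1) as [d2 [hd2 H2]].
      exists d2; split; auto.
Qed.

Lemma comp1_uniform_below f : seq_cont_selfmaps_I f -> forall M eps, 0 < eps ->
  exists del, 0 < del /\ forall r, (r < M)%nat -> forall a b, inI a -> inI b ->
    Rabs (a - b) < del -> Rabs (comp1 f r a - comp1 f r b) < eps.
Proof.
  intros hf M eps heps. induction M as [|M [d [hd H]]].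
  - exists 1; split; [lra|]. intros; lia.
  - destruct (continuous_on_I_uniform (comp1 f M) (proj2 (cont_selfmap_I_comp1 f hf M))
      eps heps) as [d' [hd' H']].
    exists (Rmin d d'); split; [apply Rmin_pos; auto|].
    intros r hr a b ha hb hab. pose proof (Rmin_l d d'); pose proof (Rmin_r d d').
    destruct (Nat.eq_dec r M) as [->|]; [apply H'|apply H]; auto; lia || lra.
Qed.

Lemma periodic_seq_mult m f : periodic_seq m f ->
  forall q n, (1 <= n)%nat -> f (n + q * m)%nat = f n.
Proof.
  intros hp q. induction q as [|q IH]; intros n hn.
  - f_equal; lia.
  - replace (n + S q * m)%nat with ((n + q * m) + m)%nat by lia.
    rewrite hp by lia. auto.
Qed.

Lemma comp1_add_mult m f : periodic_seq m f -> forall q t x,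
  comp1 f (t + q * m) x = comp1 f t (comp1 f (q * m) x).
Proof.
  intros hp q t x. induction t as [|t IH]; [reflexivity|].
  change (comp1 f (S t + q * m) x) with (f (S t + q * m)%nat (comp1 f (t + q * m) x)).
  rewrite IH, (periodic_seq_mult m f hp q (S t)) by lia. reflexivity.
Qed.

Lemma ball_openI c r : openI (ball c r).
Proof.
  split; [intros x [hx _]; auto|].
  intros x [hx hr]. exists (r - Rabs (x - c)); split; [lra|].
  intros y hy hyx; split; auto.
  pose proof (Rabs_triang (y - x) (x - c)) as ht.
  replace (y - x + (x - c)) with (y - c) in ht by ring. lra.
Qed.

Lemma ball_nonempty c r : inI c -> 0 < r -> nonempty (ball c r).
Proof. intros. exists c; split; auto. rewrite Rminus_diag, Rabs_R0; auto. Qed.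

Lemma ball_convex c r : convex_set (ball c r).
Proof.
  intros a b w [ha h1] [hb h2] hw; unfold ball, inI, Rmin, Rmax in *.
  destruct (Rle_dec a b); revert h1 h2; unfold Rabs;
    repeat destruct Rcase_abs; intros; split; lra.
Qed.

(* Weak mixing sends points of W to near 0 and near 1 at a common time [r + q m]
   with [r < m]; since the finitely many [f_1^r] are uniformly equicontinuous,
   the two points must already be far apart at time [q m]. *)
Lemma weakly_mixing_spread_at_period m f : (1 <= m)%nat -> seq_cont_selfmaps_I f ->
  periodic_seq m f -> weakly_mixing f ->
  exists eta, 0 < eta /\ forall W, openI W -> nonempty W ->
    exists q, Nset f W eta (q * m).
Proof.
  intros hm hf hp hw.
  destruct (comp1_uniform_below f hf m (1/2) ltac:(lra)) as [del [hdel Hdel]].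
  exists (del / 2); split; [lra|]. intros W hW hne.
  destruct (hw W W (ball 0 (1/4)) (ball 1 (1/4)) hW hne hW hne
     (ball_openI _ _) (ball_nonempty 0 (1/4) ltac:(unfold inI; lra) ltac:(lra))
     (ball_openI _ _) (ball_nonempty 1 (1/4) ltac:(unfold inI; lra) ltac:(lra)))
    as [n [[x [hx [_ hx1]]] [y [hy [_ hy1]]]]].
  assert (hn : n = (n mod m + (n / m) * m)%nat)
    by (pose proof (Nat.div_mod n m ltac:(lia)); lia).
  rewrite hn, (comp1_add_mult m f hp) in hx1, hy1.
  exists (n / m)%nat, x, y; split; [auto|split; [auto|]].
  destruct (cont_selfmap_I_comp1 f hf (n / m * m)) as [hI _].
  destruct (Rlt_le_dec (Rabs (comp1 f (n / m * m) x - comp1 f (n / m * m) y)) del)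
    as [hlt|]; [exfalso|lra].
  pose proof (Hdel (n mod m)%nat (Nat.mod_upper_bound n m ltac:(lia)) _ _
    (hI x (proj1 hW x hx)) (hI y (proj1 hW y hy)) hlt) as hclose.
  revert hclose hx1 hy1; unfold Rabs; repeat destruct Rcase_abs; lra.
Qed.

Definition net_ball (K : nat) (r : R) (k : nat) : R -> Prop := ball (INR k / INR K) r.

Definition interval_net (eta : R) (K : nat) : Prop :=
  forall p q, inI p -> inI q -> p <= q -> q - p >= eta ->
  exists k, (k <= K)%nat /\ forall z, net_ball K (eta / 4) k z -> p <= z <= q.

Lemma nat_between x : 0 <= x -> exists k : nat, x < INR k <= x + 1.
Proof.
  intros hx. destruct (archimed x) as [h1 h2].
  assert (hz : (0 < up x)%Z) by (apply lt_0_IZR; lra).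
  exists (Z.to_nat (up x)). rewrite INR_IZR_INZ, Z2Nat.id by lia. lra.
Qed.

Lemma interval_net_exists eta : 0 < eta -> exists K, (0 < K)%nat /\ interval_net eta K.
Proof.
  intros heta. destruct (nat_between (2 / eta)) as [K [hK1 hK2]].
  { apply Rlt_le, Rdiv_lt_0_compat; lra. }
  assert (hKpos : 0 < INR K) by (assert (0 < 2 / eta) by (apply Rdiv_lt_0_compat; lra); lra).
  assert (hmesh : 1 / INR K < eta / 2).
  { apply (Rmult_lt_reg_r (INR K)); auto. field_simplify; [|lra].
    apply (Rmult_lt_reg_r (/ eta)); [apply Rinv_0_lt_compat; auto|].
    unfold Rdiv in hK1. field_simplify; lra. }
  exists K; split; [apply INR_lt; simpl; lra|]. intros p q hp hq hpq hlen.
  destruct (nat_between (INR K * (p + eta / 4))) as [k [hk1 hk2]].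
  { apply Rmult_le_pos; unfold inI in *; lra. }
  assert (hc1 : p + eta / 4 < INR k / INR K).
  { apply (Rmult_lt_reg_r (INR K)); auto. field_simplify; lra. }
  assert (hc2 : INR k / INR K <= p + eta / 4 + 1 / INR K).
  { apply (Rmult_le_reg_r (INR K)); auto. field_simplify; lra. }
  exists k; split.
  - apply INR_le, (Rmult_le_reg_r (/ INR K)); [apply Rinv_0_lt_compat; auto|].
    rewrite Rinv_r by lra. unfold inI, Rdiv in *. lra.
  - intros z [_ hz]. revert hz; unfold Rabs; destruct Rcase_abs; intros; lra.
Qed.

Lemma net_center_inI K k : (0 < K)%nat -> (k <= K)%nat -> inI (INR k / INR K).
Proof.
  intros hK hk. apply lt_0_INR in hK. apply le_INR in hk. split.
  - apply Rmult_le_pos; [apply pos_INR|apply Rlt_le, Rinv_0_lt_compat; auto].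
  - apply (Rmult_le_reg_r (INR K)); auto. field_simplify; lra.
Qed.

(* By the intermediate value theorem the image of [X] contains an interval of length [eta]. *)
Lemma image_covers_net_ball g eta K X : interval_net eta K ->
  (forall x, inI x -> inI (g x)) -> continuous_on_I g ->
  (forall x, X x -> inI x) -> convex_set X ->
  forall x y, X x -> X y -> Rabs (g x - g y) > eta ->
  exists k, (k <= K)%nat /\ forall z, net_ball K (eta / 4) k z -> exists w, X w /\ g w = z.
Proof.
  intros hnet hI hc hXI hXc x y hx hy hfar.
  destruct (hnet (Rmin (g x) (g y)) (Rmax (g x) (g y))) as [k [hk Hk]].
  - unfold Rmin; destruct Rle_dec; auto.
  - unfold Rmax; destruct Rle_dec; auto.
  - unfold Rmin, Rmax; destruct Rle_dec; lra.
  - revert hfar; unfold Rmin, Rmax, Rabs; destruct Rle_dec; destruct Rcase_abs; lra.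
  - exists k; split; auto. intros z hz.
    destruct (continuous_on_I_IVT g x y z hc (hXI x hx) (hXI y hy) (Hk z hz))
      as [w [hw hgw]].
    exists w; split; auto. apply (hXc x y); auto.
Qed.

Lemma Nset_subset f U V delta n : (forall x, U x -> V x) ->
  Nset f U delta n -> Nset f V delta n.
Proof. intros hUV [x [y [hx [hy hd]]]]. exists x, y; auto. Qed.

Lemma finite_choice_bounded (P : nat -> nat -> Prop) K :
  (forall k, (k <= K)%nat -> exists i, P k i) ->
  exists c, forall k, (k <= K)%nat -> exists i, (i <= c)%nat /\ P k i.
Proof.
  induction K as [|K IH]; intros H.
  - destruct (H 0%nat (le_n 0)) as [i hi]. exists i. intros k hk.
    replace k with 0%nat by lia. exists i; auto.
  - destruct IH as [c hc]; [intros k hk; apply H; lia|].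
    destruct (H (S K) (le_n _)) as [i hi]. exists (Nat.max c i). intros k hk.
    destruct (Nat.eq_dec k (S K)) as [->|].
    + exists i; split; [lia|auto].
    + destruct (hc k ltac:(lia)) as [i' [? ?]]. exists i'; split; [lia|auto].
Qed.

Lemma bounded_gaps (P Q : nat -> Prop) c j0 : P j0 ->
  (forall j, P j -> exists i, (1 <= i <= c)%nat /\ P (j + i)%nat /\ Q (j + i)%nat) ->
  forall n, exists j, (n <= j <= n + j0 + c)%nat /\ Q j.
Proof.
  intros hj0 hstep.
  assert (H : forall n, exists j, (n <= j <= n + j0 + c)%nat /\ P j /\ Q j).
  { induction n as [|n [j [hj [hPj hQj]]]].
    - destruct (hstep j0 hj0) as [i [hi [? ?]]]. exists (j0 + i)%nat; split; [lia|auto].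
    - destruct (Nat.eq_dec j n) as [->|].
      + destruct (hstep n hPj) as [i [hi [? ?]]]. exists (n + i)%nat; split; [lia|auto].
      + exists j; split; [lia|auto]. }
  intros n. destruct (H n) as [j [? [_ ?]]]. exists j; auto.
Qed.

Lemma syndetic_of_multiples m a (Q : nat -> Prop) : (1 <= m)%nat ->
  (forall n, exists j, (n <= j <= n + a)%nat /\ Q (j * m)%nat) -> syndetic Q.
Proof.
  intros hm H. exists ((a + 1) * m)%nat. intros i.
  pose proof (Nat.div_mod i m ltac:(lia)). pose proof (Nat.mod_upper_bound i m ltac:(lia)).
  destruct (H (i / m + 1)%nat) as [j [hj hQ]].
  exists (j * m)%nat; split; [|auto]. split; nia.
Qed.

Section SyndeticSensitivity.

Variables (m : nat) (f : nat -> R -> R) (eta : R) (K : nat).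
Hypotheses (hf : seq_cont_selfmaps_I f) (hp : periodic_seq m f)
  (heta : 0 < eta) (hK : (0 < K)%nat) (hnet : interval_net eta K)
  (hspread : forall W, openI W -> nonempty W -> exists q, Nset f W eta (q * m)).

Definition covers_net_ball (B : R -> Prop) (j : nat) : Prop :=
  exists k, (k <= K)%nat /\
    forall z, net_ball K (eta / 4) k z -> exists x, B x /\ comp1 f (j * m) x = z.

Lemma comp1_add_periods i j x :
  comp1 f ((j + i) * m) x = comp1 f (i * m) (comp1 f (j * m) x).
Proof. replace ((j + i) * m)%nat with (i * m + j * m)%nat by lia. apply comp1_add_mult, hp. Qed.

Lemma covers_net_ball_of_Nset B q : (forall x, B x -> inI x) -> convex_set B ->
  Nset f B eta (q * m) -> covers_net_ball B q.
Proof.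
  intros hBI hBc [x [y [hx [hy hfar]]]].
  destruct (cont_selfmap_I_comp1 f hf (q * m)) as [hI hc].
  destruct (image_covers_net_ball _ eta K B hnet hI hc hBI hBc x y hx hy hfar)
    as [k [hk Hk]].
  exists k; split; auto.
Qed.

(* At time 0 a net ball, of diameter [< eta / 2], cannot be [eta]-spread. *)
Lemma net_ball_spread_time_bounded : exists c, forall k, (k <= K)%nat ->
  exists i, (1 <= i <= c)%nat /\ Nset f (net_ball K (eta / 4) k) eta (i * m).
Proof.
  destruct (finite_choice_bounded
    (fun k i => (1 <= i)%nat /\ Nset f (net_ball K (eta / 4) k) eta (i * m)) K)
    as [c hc].
  - intros k hk.
    destruct (hspread _ (ball_openI _ _)
      (ball_nonempty _ (eta / 4) (net_center_inI K k hK hk) ltac:(lra))) as [i hi].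
    exists i; split; [|auto].
    destruct i; [exfalso|lia].
    destruct hi as [x [y [[_ hx] [[_ hy] hfar]]]]; simpl in hfar.
    revert hx hy hfar; unfold Rabs; repeat destruct Rcase_abs; lra.
  - exists c. intros k hk. destruct (hc k hk) as [i [? [? ?]]].
    exists i; split; [lia|auto].
Qed.

Lemma covers_net_ball_recurrent B : (forall x, B x -> inI x) -> convex_set B ->
  exists c, forall j, covers_net_ball B j ->
    exists i, (1 <= i <= c)%nat /\ covers_net_ball B (j + i) /\ Nset f B eta ((j + i) * m).
Proof.
  intros hBI hBc. destruct net_ball_spread_time_bounded as [c hc].
  exists c. intros j [k [hk Hk]].
  destruct (hc k hk) as [i [hi [x [y [hx [hy hfar]]]]]].
  destruct (Hk x hx) as [x' [hx' <-]]. destruct (Hk y hy) as [y' [hy' <-]].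
  assert (hfar' : Nset f B eta ((j + i) * m)).
  { exists x', y'. rewrite !comp1_add_periods. auto. }
  exists i; split; [auto|split; [|auto]].
  apply covers_net_ball_of_Nset; auto.
Qed.

Lemma Nset_syndetic U : (1 <= m)%nat -> openI U -> nonempty U -> syndetic (Nset f U eta).
Proof.
  intros hm hU [x0 hx0].
  destruct (proj2 hU x0 hx0) as [e [he HU]].
  set (B := ball x0 e).
  assert (hBU : forall x, B x -> U x) by (intros x [hx hxe]; auto).
  assert (hBI : forall x, B x -> inI x) by (intros x [hx _]; auto).
  destruct (covers_net_ball_recurrent B hBI (ball_convex x0 e)) as [c hc].
  destruct (hspread B (ball_openI x0 e) (ball_nonempty x0 e (proj1 hU x0 hx0) he))
    as [j0 hj0].
  apply (syndetic_of_multiples m (j0 + c)); auto.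
  intros n. destruct (bounded_gaps (covers_net_ball B) (fun j => Nset f B eta (j * m))
    c j0 (covers_net_ball_of_Nset B j0 hBI (ball_convex x0 e) hj0) hc n) as [j [hj hN]].
  exists j; split; [lia|]. apply (Nset_subset f B); auto.
Qed.

End SyndeticSensitivity.

Lemma syndetically_sensitive_of_weakly_mixing m f : (1 <= m)%nat ->
  seq_cont_selfmaps_I f -> periodic_seq m f -> weakly_mixing f ->
  syndetically_sensitive f.
Proof.
  intros hm hf hp hw.
  destruct (weakly_mixing_spread_at_period m f hm hf hp hw) as [eta [heta hspread]].
  destruct (interval_net_exists eta heta) as [K [hK hnet]].
  exists eta; split; auto. intros U hU hne.
  apply (Nset_syndetic m f eta K); auto.
Qed.

Lemma count_below_le_succ S n : count_below S n <= count_below S (Datatypes.S n).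
Proof. simpl. destruct excluded_middle_informative; lra. Qed.

Lemma count_below_mono S p n : (p <= n)%nat -> count_below S p <= count_below S n.
Proof.
  induction 1 as [|n _ IH]; [lra|]. pose proof (count_below_le_succ S n). lra.
Qed.

Lemma count_below_succ_in S j : S j -> count_below S (Datatypes.S j) = count_below S j + 1.
Proof. intros hj. simpl. destruct excluded_middle_informative; [lra|contradiction]. Qed.

(* Every block [{(a+1)k, ..., (a+1)k + a}] meets [S], so the density is at least [1/(a+1)]. *)
Lemma syndetic_count_below S a : (forall i, exists j, (i <= j <= i + a)%nat /\ S j) ->
  forall k, INR k <= count_below S ((a + 1) * k).
Proof.
  intros hS. induction k as [|k IH]; [rewrite Nat.mul_0_r; simpl; lra|].
  destruct (hS ((a + 1) * k)%nat) as [j [hj Sj]].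
  pose proof (count_below_mono S ((a + 1) * k) j ltac:(lia)).
  pose proof (count_below_mono S (Datatypes.S j) ((a + 1) * Datatypes.S k) ltac:(lia)).
  rewrite count_below_succ_in in * by auto. rewrite S_INR. lra.
Qed.

Lemma syndetic_pos_upper_density S : syndetic S -> pos_upper_density S.
Proof.
  intros [a ha].
  assert (ha1 : 0 < INR (a + 1)) by (apply lt_0_INR; lia).
  exists (1 / (2 * INR (a + 1))); split; [apply Rdiv_lt_0_compat; lra|].
  intros N. exists ((a + 1) * Datatypes.S N)%nat; split; [nia|split; [nia|]].
  pose proof (syndetic_count_below S a ha (Datatypes.S N)) as hcount.
  assert (hN : 0 < INR (Datatypes.S N)) by (apply lt_0_INR; lia).
  rewrite mult_INR. apply Rlt_gt.
  apply (Rmult_lt_reg_r (INR (a + 1) * INR (Datatypes.S N))); [nra|].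
  field_simplify; lra.
Qed.

Theorem corollary4p3 (m : nat) (f : nat -> R -> R) :
  (1 <= m)%nat ->
  seq_cont_selfmaps_I f ->
  periodic_seq m f ->
  weakly_mixing f ->
  ergodically_sensitive f /\ syndetically_sensitive f.
Proof.
  intros hm hf hp hw.
  destruct (syndetically_sensitive_of_weakly_mixing m f hm hf hp hw) as [delta [hdelta H]].
  split; exists delta; split; auto.
  intros U hU hne. apply syndetic_pos_upper_density; auto.
Qed.
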